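(* Let $\mathscr{C}$ be a graph class containing all trees. Then for every real $\alpha\ge1$, no algorithm is a $0$-uniform $\alpha$-approximation for Minimum Dominating Set on $\mathscr{C}$; that is, there is no map $\mathsf{A}$ assigning to each $G\in\mathscr{C}$ a dominating set $\mathsf{A}(G)$ with $|\mathsf{A}(G)|\le\alpha\,\mathrm{MDS}(G)$ such that $|\mathsf{A}(G)\cap S|\le\alpha\,\mathrm{MDS}(G,S)$ for all $G\in\mathscr{C}$ and $S\subseteq V(G)$.
   Context: $\mathrm{MDS}(G,S)$ is the minimum size of a set $X\subseteq V(G)$ such that every vertex of $S$ is in $X$ or adjacent to a vertex of $X$; $\mathrm{MDS}(G)=\mathrm{MDS}(G,V(G))$. *)

From HB Require Import structures.
From mathcomp Require Import all_boot all_order all_algebra.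
From mathcomp Require Import reals.
Set Implicit Arguments. Unset Strict Implicit. Unset Printing Implicit Defensive.

Record graph := Graph {
  gn : nat;
  gadj : rel 'I_gn;
  gsym : symmetric gadj;
  girr : irreflexive gadj }.

Definition V (G : graph) := 'I_(gn G).

Definition dominates (G : graph) (X S : {set 'I_(gn G)}) : bool :=
  [forall v in S, (v \in X) || [exists u in X, gadj u v]].

Definition dominating_set (G : graph) (X : {set 'I_(gn G)}) : bool :=
  dominates X [set: 'I_(gn G)].

(* MDS(G,S): minimum size of a set X dominating S (V(G) itself dominates S,
   so the default value gn G = #|V(G)| never exceeds the true minimum). *)
Definition MDS_on (G : graph) (S : {set 'I_(gn G)}) : nat :=
  \big[minn/gn G]_(X : {set 'I_(gn G)} | dominates X S) #|X|.

Definition MDS (G : graph) : nat := MDS_on [set: 'I_(gn G)].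

Definition connected_graph (G : graph) : Prop :=
  forall x y : 'I_(gn G), connect (gadj (g:=G)) x y.

Definition acyclic (G : graph) : Prop :=
  forall p : seq 'I_(gn G), uniq p -> 3 <= size p -> ~~ cycle (gadj (g:=G)) p.

Definition is_tree (G : graph) : Prop :=
  0 < gn G /\ connected_graph G /\ acyclic G.

From mathcomp Require Import all_boot all_order all_algebra.
From mathcomp Require Import reals zify lra.
Import Order.TTheory GRing.Theory Num.Theory.

Set Implicit Arguments.
Unset Strict Implicit.
Unset Printing Implicit Defensive.

(* Let T be the complete N-ary tree of depth two with 2 alpha < N, and U the set of the
   N children of the root.  Then MDS(T) <= N (U dominates T) and MDS(T, U) <= 1 (the root
   dominates U).  A dominating set D that misses m vertices of U must contain all N leaves
   below each of them, so m N <= |D| <= alpha N, while |D :&: U| = N - m <= alpha;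
   hence N <= 2 alpha, a contradiction. *)

Lemma MDS_on_le_card (G : graph) (S X : {set 'I_(gn G)}) :
  dominates X S -> (MDS_on S <= #|X|)%N.
Proof. by move=> domX; rewrite /MDS_on -minEnat -leEnat; exact: bigmin_le_cond. Qed.

Lemma dominating_pendant (G : graph) (X : {set 'I_(gn G)}) (v p : 'I_(gn G)) :
  dominating_set X -> (forall u, gadj u v -> u = p) -> p \notin X -> v \in X.
Proof.
move=> /forallP/(_ v); rewrite in_setT /= => /orP[// | /existsP[u /andP[uX uv]]].
by move=> nbr_v /negP[]; rewrite -(nbr_v u uv).
Qed.

Section ParentGraph.
Variables (n : nat) (par : nat -> nat).
Hypothesis par_lt : forall v : 'I_n, 0 < v -> par v < v.

Definition parent_adj (u v : 'I_n) : bool :=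
  (0 < v) && (u == par v :> nat) || (0 < u) && (v == par u :> nat).

Lemma parent_adj_sym : symmetric parent_adj.
Proof. by move=> u v; rewrite /parent_adj orbC. Qed.

Lemma parent_adj_irr : irreflexive parent_adj.
Proof.
by move=> v; rewrite /parent_adj orbb; apply/andP=> -[/par_lt + /eqP ev]; rewrite -ev ltnn.
Qed.

Definition parent_graph := Graph parent_adj_sym parent_adj_irr.

Lemma parent_adj_lt (u v : 'I_n) : parent_adj u v -> u < v -> u = par v :> nat.
Proof. by case/orP=> /andP[+ /eqP ->] // => /par_lt; lia. Qed.

(* The two cycle neighbours of the largest vertex are both below it, hence both its parent. *)
Lemma parent_cycle_max_head (x y w : 'I_n) (r : seq 'I_n) :
  uniq [:: x, y, w & r] -> {in [:: x, y, w & r], forall t : 'I_n, t <= x} ->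
  ~~ cycle parent_adj [:: x, y, w & r].
Proof.
set z := last w r => /= /and3P[x_notin y_notin _] xmax; apply/negP.
rewrite /= rcons_path => /and4P[xy _ _ zx].
have z_in : z \in w :: r by exact: mem_last.
have below_x t : t \in y :: w :: r -> t < x.
  move=> t_in; rewrite ltn_neqAle (inj_eq (@ord_inj n)) xmax; last by rewrite inE t_in orbT.
  by rewrite andbT; apply: contraNneq x_notin => <-.
have y_par : y = par x :> nat.
  by apply: parent_adj_lt; [rewrite parent_adj_sym | exact: below_x (mem_head _ _)].
have z_par : z = par x :> nat.
  by apply: parent_adj_lt zx _; apply: below_x; rewrite inE z_in orbT.
by move/negP: y_notin; apply; rewrite (ord_inj (etrans y_par (esym z_par))).
Qed.

Lemma parent_graph_acyclic : acyclic parent_graph.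
Proof.
move=> [//|a p] up sp; set s := a :: p in up sp *.
have [x x_in xmax] := @arg_maxnP _ a (mem s) (@nat_of_ord n) (mem_head a p).
rewrite -(rot_cycle (index x s)); move: up sp (mem_rot (index x s) s).
rewrite -(rot_uniq (index x s)) -(size_rot (index x s)) (rot_index x_in).
case: (_ ++ _) => [|y [|w r]] // up _ mem_s.
by apply: parent_cycle_max_head => // t; rewrite mem_s; exact: xmax.
Qed.

Lemma connect_parent_root (n_gt0 : 0 < n) (v : 'I_n) :
  connect parent_adj (Ordinal n_gt0) v.
Proof.
elim: {v}(v : nat) {-2}v (leqnn v) => [|m IH] v v_le.
  by have -> : v = Ordinal n_gt0 by apply: ord_inj; rewrite /=; lia.
have [v0|v_gt0] := posnP v; first by have -> : v = Ordinal n_gt0 by apply: ord_inj.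
have par_v := par_lt v_gt0.
have par_v_lt : par v < n by exact: ltn_trans par_v (ltn_ord v).
have par_v_le : par v <= m by lia.
apply: connect_trans (IH (Ordinal par_v_lt) par_v_le) (connect1 _).
by rewrite /parent_adj /= v_gt0 eqxx.
Qed.

Lemma parent_graph_tree : 0 < n -> is_tree parent_graph.
Proof.
move=> n_gt0; split=> //; split; last exact: parent_graph_acyclic.
move=> x y; apply: connect_trans (connect_parent_root n_gt0 y).
by rewrite (sym_connect_sym parent_adj_sym) connect_parent_root.
Qed.
End ParentGraph.

Section TwoLevelTree.
Variable N : nat.
Hypothesis N_gt0 : 0 < N.

Definition ktree_parent (v : nat) : nat := v.-1 %/ N.

Lemma ktree_parent_lt (v : nat) : 0 < v -> ktree_parent v < v.
Proof. by move=> v_gt0; rewrite /ktree_parent (leq_ltn_trans (leq_div _ _)) ?ltn_predL. Qed.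

Lemma ktree_parent_child (c j : nat) : j < N -> ktree_parent (c * N + j.+1) = c.
Proof. by move=> j_lt; rewrite /ktree_parent addnS /= divnMDl // divn_small // addn0. Qed.

(* The complete N-ary tree of depth two, numbered breadth first: the root 0, its children
   1, ..., N, and the children c * N + 1, ..., c * N + N of each c. *)
Definition ktree : graph :=
  parent_graph (fun v : 'I_(N * N + N).+1 => @ktree_parent_lt v).

Definition ktree_level1 : {set 'I_(gn ktree)} :=
  [set v : 'I_(gn ktree) | 0 < (v : nat) <= N].

Lemma ktree_parent_le (v : 'I_(gn ktree)) : ktree_parent v <= N.
Proof.
rewrite /ktree_parent -ltnS ltn_divLR //; have := ltn_ord v; rewrite /=; nia.
Qed.

Lemma card_ktree_level1 : #|ktree_level1| = N.
Proof.
pose f (i : 'I_N) : 'I_(gn ktree) := inord i.+1.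
have fE i : f i = i.+1 :> nat by rewrite inordK //; have := ltn_ord i; nia.
have f_inj : injective f by move=> i j /(congr1 val); rewrite /= !fE => -[/val_inj].
rewrite -[RHS](card_ord N) -cardsT -(card_imset _ f_inj).
apply: eq_card => v; rewrite inE.
apply/idP/imsetP => [v_mid | [i _ ->]]; last by rewrite fE ltn_ord.
have /andP[v_gt0 v_le] := v_mid; have v_lt : (v : nat).-1 < N by rewrite prednK.
by exists (Ordinal v_lt) => //; apply: ord_inj; rewrite fE prednK.
Qed.

Lemma ktree_level1_dominating : dominating_set ktree_level1.
Proof.
apply/forallP => v; apply/implyP => _; rewrite inE.
have [v0 | v_gt0] := posnP v.
  apply/orP; right; apply/existsP; exists (inord 1).
  rewrite inE /= /parent_adj inordK /=; last by nia.
  by rewrite N_gt0 v0 /ktree_parent div0n.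
have [// | v_gt] := leqP v N.
apply/orP; right; apply/existsP; exists (inord (ktree_parent v)).
have par_le := ktree_parent_le v.
have par_gt0 : 0 < ktree_parent v by rewrite /ktree_parent divn_gt0 //; lia.
rewrite inE /= /parent_adj v_gt0 inordK ?par_gt0 ?par_le ?eqxx //.
by rewrite ltnS (leq_trans par_le) ?leq_addl.
Qed.

Lemma ktree_root_dominates_level1 : dominates [set ord0 : 'I_(gn ktree)] ktree_level1.
Proof.
apply/forallP => v; apply/implyP; rewrite inE => /andP[v_gt0 v_le].
apply/orP; right; apply/existsP; exists ord0.
by rewrite !inE eqxx /= /parent_adj v_gt0 /ktree_parent divn_small // prednK.
Qed.

Definition ktree_leaf (c : 'I_(gn ktree)) (j : 'I_N) : 'I_(gn ktree) := inord (c * N + j.+1).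

Lemma ktree_leafE (c : 'I_(gn ktree)) (j : 'I_N) :
  c \in ktree_level1 -> ktree_leaf c j = c * N + j.+1 :> nat.
Proof. by rewrite inE => /andP[_ c_le]; rewrite inordK //; have := ltn_ord j; nia. Qed.

(* A leaf has no children, since their numbers would exceed the last vertex. *)
Lemma ktree_leaf_nbr (c : 'I_(gn ktree)) (j : 'I_N) :
  c \in ktree_level1 -> forall u, gadj u (ktree_leaf c j) -> u = c.
Proof.
move=> c_mid u; have := c_mid; rewrite inE => /andP[c_gt0 _].
rewrite /= /parent_adj ktree_leafE // ktree_parent_child //.
case/orP => /andP[_ /eqP u_par]; first exact: val_inj.
by have := ktree_parent_le u; rewrite -u_par; nia.
Qed.

Lemma dominating_ktree_card (D : {set 'I_(gn ktree)}) :
  dominating_set D -> #|ktree_level1 :\: D| * N <= #|D|.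
Proof.
move=> D_dom; pose leaf cj := ktree_leaf cj.1 cj.2.
have leaf_inj : {in setX (ktree_level1 :\: D) [set: 'I_N] &, injective leaf}.
  move=> [c j] [c' j'] /setXP[/setDP[c_mid _] _] /setXP[/setDP[c'_mid _] _].
  move=> /(congr1 val); rewrite /leaf /= !ktree_leafE // => e.
  have := congr1 ktree_parent e; rewrite !ktree_parent_child // => /val_inj ecc.
  by move: e; rewrite ecc => /addnI [/val_inj ->].
rewrite -[X in _ * X <= _](card_ord N) -cardsT -cardsX -(card_in_imset leaf_inj).
apply/subset_leq_card/subsetP => _ /imsetP[[c j] /setXP[/setDP[c_mid c_notD] _] ->].
exact: dominating_pendant D_dom (@ktree_leaf_nbr c j c_mid) c_notD.
Qed.

Lemma MDS_ktree : MDS ktree <= N.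
Proof. by rewrite -card_ktree_level1; exact: MDS_on_le_card ktree_level1_dominating. Qed.

Lemma MDS_on_ktree_level1 : MDS_on ktree_level1 <= 1.
Proof.
rewrite -(cards1 (ord0 : 'I_(gn ktree))).
exact: MDS_on_le_card ktree_root_dominates_level1.
Qed.

Lemma ktree_tree : is_tree ktree.
Proof. exact: parent_graph_tree. Qed.
End TwoLevelTree.

Local Open Scope ring_scope.

Theorem mainTheorem14 (R : realType) (C : graph -> Prop)
  (HC : forall G : graph, is_tree G -> C G)
  (alpha : R) (halpha : 1 <= alpha) :
  ~ exists A : forall G : graph, {set 'I_(gn G)},
      forall G : graph, C G ->
        [/\ dominating_set (A G),
            (#|A G|%:R <= alpha * (MDS G)%:R) &
            forall S : {set 'I_(gn G)},
              #|A G :&: S|%:R <= alpha * (MDS_on S)%:R].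
Proof.
case=> A A_approx; have alpha_ge0 : 0 <= alpha by lra.
have [N N_gt0 alpha2_lt] : exists2 N : nat, (0 < N)%N & 2 * alpha < N%:R.
  exists (Num.bound (2 * alpha)).+1 => //.
  by have := archi_boundP (x := 2 * alpha) ltac:(lra); rewrite -addn1 natrD; lra.
set U := ktree_level1 N; set D := A (ktree N).
have [D_dom D_le DS_le] := A_approx _ (HC _ (ktree_tree N)).
have missed_le : #|U :\: D|%:R <= alpha.
  rewrite -(ler_pM2r (ltr0Sn _ N.-1)) prednK // -natrM.
  apply: le_trans (_ : _ <= alpha * (MDS (ktree N))%:R) _.
    by apply: le_trans D_le; rewrite ler_nat (dominating_ktree_card N_gt0).
  by rewrite ler_wpM2l // ler_nat (MDS_ktree N_gt0).
have hit_le : #|U :&: D|%:R <= alpha.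
  apply: le_trans (_ : _ <= alpha * (MDS_on U)%:R) _; first by rewrite setIC DS_le.
  by rewrite -[leRHS]mulr1 ler_wpM2l // lern1 (MDS_on_ktree_level1 N).
have := cardsID D U; rewrite (card_ktree_level1 N_gt0).
by move=> /(congr1 (fun k => k%:R : R)); rewrite natrD; lra.
Qed.
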